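(* Let $\mathcal{C}$ be an $(n,k)$ linear code over $\mathrm{GF}(q^m)$ with rank weight distribution $A_0,\dots,A_n$, and let $d_{\mathrm{R}}'$ be the minimum rank distance of $\mathcal{C}^\perp$. If $\nu<d_{\mathrm{R}}'$ (with $0\le\nu\le n$), then $$\sum_{i=0}^{n-\nu}{n-i\brack\nu}A_i=q^{m(k-\nu)}{n\brack\nu}.$$
   Context: $q$ is a prime power. For $\mathbf{x}\in\mathrm{GF}(q^m)^n$, $\mathrm{rk}(\mathbf{x})$ is the dimension over $\mathrm{GF}(q)$ of the $\mathrm{GF}(q)$-span of its coordinates in $\mathrm{GF}(q^m)$; the rank distance is $d(\mathbf{x},\mathbf{y})=\mathrm{rk}(\mathbf{x}-\mathbf{y})$, and the minimum rank distance of a code is the minimum over pairs of distinct codewords. $A_i$ is the number of codewords of $\mathcal{C}$ of rank $i$. An $(n,k)$ linear code is a $k$-dimensional $\mathrm{GF}(q^m)$-subspace of $\mathrm{GF}(q^m)^n$; $\mathcal{C}^\perp=\{\mathbf{u}:\sum_iu_ic_i=0\ \forall\mathbf{c}\in\mathcal{C}\}$. Gaussian binomial: ${a\brack u}=\prod_{i=0}^{u-1}\frac{q^a-q^i}{q^u-q^i}$ for $0\le u\le a$ (equal to $1$ for $u=0$). *)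

From HB Require Import structures.
From mathcomp Require Import all_boot all_order all_algebra all_field.
Set Implicit Arguments. Unset Strict Implicit. Unset Printing Implicit Defensive.
Import GRing.Theory.
Local Open Scope ring_scope.

(* Setting: F = GF(q) a finite field, L a finite extension of F of degree m,
   i.e. L = GF(q^m).  [finvect_type L] is L equipped with its canonical
   finType structure (so that vectors over L can be counted). *)

Section RankMetric.
Variables (F : finFieldType) (L : fieldExtType F).
Local Notation Lf := (finvect_type L).

Definition rk (n : nat) (x : 'rV[Lf]_n) : nat :=
  \dim (span [seq (x ord0 j : L) | j <- enum 'I_n] : {vspace L}).

Definition rank_wd (n : nat) (C : {vspace 'rV[Lf]_n}) (i : nat) : nat :=
  #|[set c : 'rV[Lf]_n | (c \in C) && (rk c == i)]|.

Definition dual_code (n : nat) (C : {vspace 'rV[Lf]_n}) : {set 'rV[Lf]_n} :=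
  [set u : 'rV[Lf]_n | [forall c : 'rV[Lf]_n,
     (c \in C) ==> (\sum_(i < n) u ord0 i * c ord0 i == 0)]].

End RankMetric.

Definition gauss_binom (q a u : nat) : rat :=
  \prod_(i < u) ((((q ^ a)%N)%:Q - ((q ^ i)%N)%:Q) / (((q ^ u)%N)%:Q - ((q ^ i)%N)%:Q)).

From HB Require Import structures.
From mathcomp Require Import all_boot all_order all_algebra all_field.
From mathcomp Require Import mxabelem zify.

(* Double counting.  Count the pairs (H, c) with H a full-rank nu x n matrix
   over GF(q), c in C and H c^T = 0.  For fixed c the rows of H range over the
   kernel of h |-> sum_j h_j c_j, a GF(q)-subspace of dimension n - rk c,
   giving prod_(s<nu) (q^(n - rk c) - q^s) choices; grouped by rank, these
   sum to the left-hand side times prod_(s<nu) (q^nu - q^s).  For fixed H,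
   every nonzero a H with a in GF(q^m)^nu has rank at most nu < d_R', so it is
   not in the dual code; hence c |-> H c^T maps C onto GF(q^m)^nu and has
   q^(m(k - nu)) zeros in C, while there are prod_(s<nu) (q^n - q^s) such H. *)

Set Implicit Arguments. Unset Strict Implicit. Unset Printing Implicit Defensive.
Import GRing.Theory.
Local Open Scope ring_scope.

Lemma card_set_sum (T : finType) (P : pred T) :
  #|[set x | P x]| = (\sum_x P x)%N.
Proof. by rewrite -sum1_card big_mkcond; apply: eq_bigr => x _; rewrite inE. Qed.

Lemma sum_card_rel (I J : finType) (R : I -> J -> bool) :
  (\sum_i #|[set j | R i j]| = \sum_j #|[set i | R i j]|)%N.
Proof.
under eq_bigr do rewrite card_set_sum.
by rewrite exchange_big; under [RHS]eq_bigr do rewrite card_set_sum.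
Qed.

Section RowFree.
Variable F : fieldType.

Lemma row_free_col_mx (t n : nat) (v : 'rV[F]_n) (B : 'M_(t, n)) :
  row_free (col_mx v B) = row_free B && ~~ (v <= B)%MS.
Proof.
rewrite /row_free -addsmxE.
have [vB | nvB] := boolP (v <= B)%MS.
  rewrite andbF (addsmx_idPr vB); apply: negbTE.
  by rewrite neq_ltn ltnS rank_leq_row.
have v0 : v != 0 by apply: contraNneq nvB => ->; rewrite sub0mx.
have rv : \rank v = 1%N by apply/eqP; rewrite eqn_leq rank_leq_row lt0n mxrank_eq0.
have cap0 : \rank (v :&: B)%MS = 0%N.
  apply/eqP; rewrite -leqn0 -ltnS; apply: leq_trans (eq_leq rv).
  by rewrite (ltn_leqif (mxrank_leqif_sup (capmxSl v B))) sub_capmx submx_refl.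
have := mxrank_sum_cap v B; rewrite cap0 rv addn0 add1n => ->.
by rewrite add1n eqSS andbT.
Qed.

End RowFree.

Definition q_falling (q a t : nat) : nat := \prod_(s < t) (q ^ a - q ^ s).

Lemma q_falling_eq0 (q a t : nat) : (a < t)%N -> q_falling q a t = 0%N.
Proof. by move=> lt_at; rewrite /q_falling (bigD1 (Ordinal lt_at)) //= subnn. Qed.

Section CardRowFree.
Variable F : finFieldType.

Lemma card_row_free_sub (p n t : nat) (A : 'M[F]_(p, n)) :
  #|[set B : 'M[F]_(t, n) | row_free B && (B <= A)%MS]|
  = q_falling #|F| (\rank A) t.
Proof.
rewrite /q_falling; elim: t => [|t IHt].
  rewrite big_ord0 (@eq_card1 _ 0) // => B.
  by rewrite !inE flatmx0 /row_free mxrank0 sub0mx !eqxx.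
(* col_mx_sub only rewrites at height 1 + t, which is not syntactically t.+1. *)
have col_sub (v : 'rV_n) (B : 'M_(t, n)) :
  ((col_mx v B : 'M_(t.+1, n)) <= A)%MS = (v <= A)%MS && (B <= A)%MS.
  exact: (col_mx_sub v B A).
rewrite big_ord_recr /= -{}IHt -sum_nat_const -[LHS]sum1_card.
rewrite (partition_big (fun B : 'M_(1 + t, n) => dsubmx B)
  (fun B => B \in [set B : 'M_(t, n) | row_free B && (B <= A)%MS])) => [|B].
  apply: eq_bigr => B; rewrite inE => /andP[freeB sBA].
  rewrite (reindex (col_mx^~ B)) /=; last first.
    exists usubmx => [v _ | X]; first by rewrite col_mxKu.
    by case/andP=> _ /eqP <-; rewrite vsubmxK.
  transitivity #|rowg A :\: rowg B|.
    rewrite -sum1_card; apply: eq_bigl => v.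
    by rewrite !inE col_mxKd eqxx row_free_col_mx col_sub freeB sBA /= !andbT andbC.
  rewrite cardsDS ?card_rowg ?(eqP freeB) //.
  by apply/subsetP => v; rewrite !mem_rowg => /submx_trans; apply.
rewrite !inE -[B]vsubmxK col_mxKd col_sub row_free_col_mx.
by case/andP=> /andP[-> _] /andP[].
Qed.

End CardRowFree.

Section BasisMatrix.
Variables (K : fieldType) (n : nat) (U : {vspace 'rV[K]_n}).

Definition vbasis_mx : 'M[K]_(\dim U, n) := \matrix_(i < \dim U) (vbasis U)`_i.

Lemma vbasis_mx_sub (h : 'rV_n) : (h <= vbasis_mx)%MS = (h \in U).
Proof.
apply/submxP/idP => [[x ->] | /coord_vbasis ->].
  rewrite mulmx_sum_row; apply: rpred_sum => i _; rewrite rpredZ // rowK.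
  by rewrite vbasis_mem ?mem_nth ?size_tuple.
exists (\row_i coord (vbasis U) i h); rewrite mulmx_sum_row.
by apply: eq_bigr => i _; rewrite rowK mxE.
Qed.

Lemma vbasis_mx_free : row_free vbasis_mx.
Proof.
apply/inj_row_free => x; rewrite mulmx_sum_row => x0; apply/rowP => i.
have /freeP vbasis_free := basis_free (vbasisP U).
rewrite mxE (vbasis_free (x 0)) // -[RHS]x0.
by apply: eq_bigr => j _; rewrite rowK.
Qed.

End BasisMatrix.

Lemma card_vspace_mulmx_eq0 (K : finFieldType) (n p : nat) (C : {vspace 'rV[K]_n})
    (N : 'M[K]_(n, p)) :
  #|[set c : 'rV_n | (c \in C) && (c *m N == 0)]|
  = (#|K| ^ (\dim C - \rank (vbasis_mx C *m N)))%N.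
Proof.
have -> : [set c : 'rV_n | (c \in C) && (c *m N == 0)]
    = (mulmx^~ (vbasis_mx C)) @: rowg (kermx (vbasis_mx C *m N)).
  apply/setP => c; rewrite inE; apply/andP/imsetP => [[] | [x]].
    rewrite -(vbasis_mx_sub C) => /submxP[x ->] xN0.
    by exists x; rewrite // mem_rowg sub_kermx mulmxA.
  rewrite mem_rowg sub_kermx mulmxA => /eqP xN0 ->.
  by rewrite -(vbasis_mx_sub C) submxMl xN0.
by rewrite card_imset ?card_rowg ?mxrank_ker //; apply/row_free_inj/vbasis_mx_free.
Qed.

Section RankMetric.
Variables (F : finFieldType) (L : fieldExtType F).
Local Notation K := (finvect_type L).
Local Notation lift := (map_mx (in_alg K)).

Lemma rk_leq (n : nat) (c : 'rV[K]_n) : (rk c <= n)%N.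
Proof. by rewrite /rk (leq_trans (dim_span _)) // size_map size_enum_ord. Qed.

Lemma rk_mul_lift (p n : nat) (a : 'rV[K]_p) (H : 'M[F]_(p, n)) :
  (rk (a *m lift H) <= rk a)%N.
Proof.
apply/dimvS/span_subvP => _ /mapP[j _ ->]; rewrite mxE.
apply: rpred_sum => t _; rewrite mxE mulr_algr rpredZ // memv_span //.
by rewrite map_f ?mem_enum.
Qed.

Definition coord_comb (n : nat) (c : 'rV[K]_n) (h : 'rV[F]_n) : L :=
  \sum_j h 0 j *: (c 0 j : L).

Fact coord_comb_is_linear (n : nat) (c : 'rV[K]_n) : linear (coord_comb c).
Proof.
move=> a h1 h2; rewrite /coord_comb scaler_sumr -big_split.
by apply: eq_bigr => j _; rewrite !mxE scalerDl scalerA.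
Qed.

HB.instance Definition _ (n : nat) (c : 'rV[K]_n) :=
  GRing.isLinear.Build F 'rV[F]_n L _ (coord_comb c) (coord_comb_is_linear c).

Lemma coord_comb_delta (n : nat) (c : 'rV[K]_n) j :
  coord_comb c (delta_mx 0 j) = c 0 j.
Proof.
rewrite /coord_comb (bigD1 j) //= big1 => [|i /negbTE ij]; rewrite mxE !eqxx /=.
  by rewrite scale1r addr0.
by rewrite ij scale0r.
Qed.

Lemma dim_lker_coord_comb (n : nat) (c : 'rV[K]_n) :
  \dim (lker (linfun (coord_comb c))) = (n - rk c)%N.
Proof.
set f := linfun (coord_comb c).
have limg_f : limg f = span [seq (c 0 j : L) | j <- enum 'I_n].
  apply/eqP; rewrite eqEsubv; apply/andP; split.
    apply/subvP => _ /memv_imgP[h _ ->]; rewrite lfunE.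
    apply: rpred_sum => j _; rewrite rpredZ // memv_span //.
    by rewrite map_f ?mem_enum.
  apply/span_subvP => _ /mapP[j _ ->].
  by rewrite -coord_comb_delta -lfunE memv_img ?memvf.
have := limg_ker_dim f fullv; rewrite capfv dimvf dim_matrix mul1r limg_f.
exact: canRL (addnK _).
Qed.

Lemma mul_tr_lift_coord_comb (p n : nat) (c : 'rV[K]_n) (H : 'M[F]_(p, n)) i :
  (c *m (lift H)^T) 0 i = coord_comb c (row i H).
Proof. by rewrite mxE; apply: eq_bigr => j _; rewrite !mxE mulr_algr. Qed.

Lemma card_row_free_orth (nu n : nat) (c : 'rV[K]_n) :
  #|[set H : 'M[F]_(nu, n) | row_free H && (c *m (lift H)^T == 0)]|
  = q_falling #|F| (n - rk c) nu.
Proof.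
set f := linfun (coord_comb c).
rewrite -(dim_lker_coord_comb c) -(eqP (vbasis_mx_free (lker f))).
rewrite -card_row_free_sub; apply: eq_card => H; rewrite !inE; congr (_ && _).
apply/eqP/row_subP => [cH0 i | rowsH].
  by rewrite vbasis_mx_sub memv_ker lfunE /= -mul_tr_lift_coord_comb cH0 mxE.
apply/rowP => i; rewrite mul_tr_lift_coord_comb mxE.
by move: (rowsH i); rewrite vbasis_mx_sub memv_ker lfunE => /eqP.
Qed.

Lemma orth_vbasis_dual_code (n : nat) (C : {vspace 'rV[K]_n}) (u : 'rV[K]_n) :
  u *m (vbasis_mx C)^T = 0 -> u \in dual_code C.
Proof.
move=> uB0; rewrite inE; apply/forallP => c; apply/implyP.
rewrite -(vbasis_mx_sub C) => /submxP[x ->].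
have -> : \sum_i u 0 i * (x *m vbasis_mx C) 0 i = (u *m (x *m vbasis_mx C)^T) 0 0.
  by rewrite [RHS]mxE; apply: eq_bigr => i _; rewrite [_^T _ _]mxE.
by rewrite trmx_mul mulmxA uB0 mul0mx mxE.
Qed.

Section DualDistance.
Variables (n nu : nat) (C : {vspace 'rV[K]_n}).
Hypothesis dual_rk_gt : forall u, u \in dual_code C -> u != 0 -> (nu < rk u)%N.

Lemma rank_vbasis_mul_lift (H : 'M[F]_(nu, n)) :
  row_free H -> \rank (vbasis_mx C *m (lift H)^T) = nu.
Proof.
(* Otherwise some a != 0 has a M^T = 0, and then a H is a dual codeword of
   rank at most nu. *)
move=> freeH; set M := vbasis_mx C *m (lift H)^T.
apply/eqP; rewrite eqn_leq rank_leq_col leqNgt; apply/negP => rankM.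
have /rowV0Pn[a /sub_kermxP aM a0] : kermx M^T != 0.
  by rewrite kermx_eq0 /row_free mxrank_tr neq_ltn rankM.
set u := a *m lift H.
have u0 : u != 0 by rewrite mulmx_free_eq0 ?row_free_map.
have u_dual : u \in dual_code C.
  by apply: orth_vbasis_dual_code; rewrite -mulmxA -[lift H]trmxK -trmx_mul.
have := dual_rk_gt u_dual u0; apply/negP; rewrite -leqNgt.
exact: leq_trans (rk_mul_lift a H) (rk_leq a).
Qed.

Lemma sum_q_falling_rk :
  (\sum_(c in C) q_falling #|F| (n - rk c) nu
   = q_falling #|F| n nu * #|K| ^ (\dim C - nu))%N.
Proof.
pose R (H : 'M[F]_(nu, n)) c := [&& row_free H, c \in C & c *m (lift H)^T == 0].
have count_H H : #|[set c | R H c]| = (row_free H * #|K| ^ (\dim C - nu))%N.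
  have [freeH | /negbTE notfreeH] := boolP (row_free H); last first.
    by apply: eq_card0 => c; rewrite inE /R notfreeH.
  rewrite mul1n -(rank_vbasis_mul_lift freeH) -card_vspace_mulmx_eq0.
  by apply: eq_card => c; rewrite !inE /R freeH.
have count_c c : #|[set H | R H c]| = ((c \in C) * q_falling #|F| (n - rk c) nu)%N.
  have [cC | /negbTE cNC] := boolP (c \in C); last first.
    by apply: eq_card0 => H; rewrite inE /R cNC andbF.
  rewrite mul1n -card_row_free_orth.
  by apply: eq_card => H; rewrite !inE /R cC.
transitivity (\sum_c #|[set H | R H c]|)%N.
  rewrite big_mkcond; apply: eq_bigr => c _.
  by rewrite count_c; case: (c \in C); rewrite ?mul1n.
rewrite -sum_card_rel.
rewrite (eq_bigr _ (fun H _ => count_H H)) -big_distrl /=; congr (_ * _)%N.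
rewrite -[n in q_falling _ n](mxrank1 F n) -card_row_free_sub card_set_sum.
by apply: eq_bigr => H _; rewrite submx1 andbT.
Qed.

End DualDistance.

Lemma sum_rk_rank_wd (n : nat) (C : {vspace 'rV[K]_n}) (g : nat -> nat) :
  (\sum_(c in C) g (rk c) = \sum_(i < n.+1) g i * rank_wd C i)%N.
Proof.
have inord_rk (c : 'rV[K]_n) : (inord (rk c) : 'I_n.+1) = rk c :> nat.
  by rewrite inordK ?ltnS ?rk_leq.
rewrite (partition_big (fun c => inord (rk c) : 'I_n.+1) xpredT) //=.
apply: eq_bigr => i _; rewrite /rank_wd -sum1_card big_distrr /=.
apply: eq_big => [c | c /andP[_ /eqP <-]]; last by rewrite inord_rk muln1.
by rewrite inE -(inj_eq val_inj) /= inord_rk.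
Qed.

Lemma sum_q_falling_rank_wd (n nu : nat) (C : {vspace 'rV[K]_n}) (q : nat) :
  (\sum_(i < (n - nu).+1) q_falling q (n - i) nu * rank_wd C i
   = \sum_(c in C) q_falling q (n - rk c) nu)%N.
Proof.
rewrite (sum_rk_rank_wd C (fun r => q_falling q (n - r) nu)).
rewrite (big_ord_widen n.+1 (fun i => q_falling q (n - i) nu * rank_wd C i)%N);
  last by rewrite ltnS leq_subr.
rewrite big_mkcond; apply: eq_bigr => i _; case: ltnP => // i_gt.
by rewrite q_falling_eq0 //; have := ltn_ord i; lia.
Qed.

End RankMetric.

Lemma natr_q_falling (q a t : nat) : (0 < q)%N -> (t <= a)%N ->
  (q_falling q a t)%:R = \prod_(s < t) ((q ^ a)%:R - (q ^ s)%:R) :> rat.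
Proof.
move=> q_gt0 le_ta; rewrite natr_prod; apply: eq_bigr => s _.
by rewrite natrB // leq_pexp2l // (leq_trans (ltnW (ltn_ord s))).
Qed.

Lemma gauss_binomE (q a t : nat) : (0 < q)%N -> (t <= a)%N ->
  gauss_binom q a t = (q_falling q a t)%:R / (q_falling q t t)%:R.
Proof. by move=> q_gt0 le_ta; rewrite !natr_q_falling // -prodf_div. Qed.

Unset Implicit Arguments.

Theorem corollary3 (F : finFieldType) (L : fieldExtType F)
  (n : nat) (C : {vspace 'rV[finvect_type L]_n}) (nu : nat) :
  (nu <= n)%N ->
  (* nu < d_R', the minimum rank distance of the dual code
     (= minimum rank of a nonzero dual codeword, by linearity) *)
  (forall u, u \in dual_code C -> u != 0 -> (nu < rk u)%N) ->
  \sum_(i < (n - nu).+1) gauss_binom #|F| (n - i) nu * (rank_wd C i)%:Q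
  = (#|F|%:Q) ^ ((\dim {:L} * \dim C)%:Z - (\dim {:L} * nu)%:Z)
    * gauss_binom #|F| n nu.
Proof.
move=> le_nu_n dual_rk_gt.
have q_gt0 : (0 < #|F|)%N := ltnW (finNzRing_gt1 F).
have cardL : #|finvect_type L| = (#|F| ^ \dim {:L})%N.
  rewrite -[\dim {:L}]/(\dim (fullv : {vspace finvect_type L})) -card_vspace.
  by apply: eq_card => x; rewrite memvf.
have le_nu_dimC : (nu <= \dim C)%N.
  have free_pid : row_free (pid_mx nu : 'M[F]_(nu, n)) by rewrite /row_free rank_pid_mx.
  by rewrite -(rank_vbasis_mul_lift dual_rk_gt free_pid) rank_leq_row.
have := sum_q_falling_rk dual_rk_gt; rewrite -sum_q_falling_rank_wd.
move/(congr1 (fun k => k%:R : rat)); rewrite natr_sum natrM => count_eq.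
rewrite subzn ?leq_mul2l ?le_nu_dimC ?orbT // -mulnBr -!pmulrn -exprnP -natrX.
rewrite expnM -cardL gauss_binomE // mulrA (mulrC _ (q_falling _ n nu)%:R).
rewrite -count_eq mulr_suml; apply: eq_bigr => i _.
have le_nu_ni : (nu <= n - i)%N by have := ltn_ord i; lia.
by rewrite gauss_binomE // -pmulrn natrM mulrAC.
Qed.
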